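(* Let $n$ be a power of $2$, $\theta\in\mathbb{R}^{n\times n}$ and $\epsilon>0$. There is a universal constant $C>0$ such that the partition produced by the $(\mathrm{TV},\epsilon)$ division scheme satisfies $$|P_{\theta,\epsilon}| \leq 1 + C\,\mathrm{TV}(\theta)\,\epsilon^{-1}\log n,$$ and for every $V>0$, $$\log|\mathcal{P}(V,n,\epsilon)| \leq C\, V\epsilon^{-1}\log n.$$
   Context: $\mathrm{TV}(\theta) = \sum_{(u,v)\in E}|\theta_u-\theta_v|$ (unnormalized), $E$ being the edges of the grid graph on the index set of the matrix (pairs of entries at $\ell_1$-distance 1). The $(\mathrm{TV},\epsilon)$ scheme: start with the whole matrix; if its $\mathrm{TV}\le\epsilon$, stop; otherwise split it dyadically into four equal-size submatrices (top-left, top-right, bottom-left, bottom-right, each with half the rows and half the columns). At each subsequent round, every current submatrix with $\mathrm{TV} > \epsilon$ is split dyadically into four in the same way; repeat until every part has $\mathrm{TV}\le\epsilon$. The resulting partition of $[n]\times[n]$ into rectangular blocks is $P_{\theta,\epsilon}$, with $|P_{\theta,\epsilon}|$ its number of blocks. $\mathcal{P}(V,n,\epsilon) = \{P_{\theta,\epsilon}: \theta\in\mathbb{R}^{n\times n},\ \mathrm{TV}(\theta)\le V\}$. *)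

From HB Require Import structures.
From mathcomp Require Import all_boot all_order all_algebra.
From mathcomp Require Import all_classical all_reals all_analysis.
Set Implicit Arguments. Unset Strict Implicit. Unset Printing Implicit Defensive.
Import Order.TTheory GRing.Theory Num.Theory.
Local Open Scope ring_scope.

(* Entry (i,j) of an m x n matrix, indices as naturals; 0 outside the range
   (never used outside the range below). *)
Definition mget (R : realType) (m n : nat) (A : 'M[R]_(m, n)) (i j : nat) : R :=
  match @insub _ (fun x => x < m)%N 'I_m i, @insub _ (fun x => x < n)%N 'I_n j with
  | Some i', Some j' => A i' j'
  | _, _ => 0
  end.

(* A dyadic square block: (row start, column start, s) = the submatrix
   [r, r + 2^s) x [c, c + 2^s). *)
Definition block := (nat * nat * nat)%type.

(* Unnormalized total variation of the submatrix on block b: the sum of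
   |theta_u - theta_v| over grid-graph edges (pairs of entries at l1-distance
   1) with both endpoints in the block. *)
Definition block_TV (R : realType) (m : nat) (theta : 'M[R]_m) (b : block) : R :=
  let: (r, c, s) := b in
  \sum_(r <= i < r + 2 ^ s)
   \sum_(c <= j < c + 2 ^ s)
     ((if (j.+1 < c + 2 ^ s)%N
       then `|mget theta i j.+1 - mget theta i j| else 0)
    + (if (i.+1 < r + 2 ^ s)%N
       then `|mget theta i.+1 j - mget theta i j| else 0)).

Definition TV (R : realType) (k : nat) (theta : 'M[R]_(2 ^ k)) : R :=
  block_TV theta (0%N, 0%N, k).

(* For s = 0 (a 1x1 block) the TV is
   0 <= eps (eps > 0), so stopping there is exactly the scheme. *)
Fixpoint tv_split (R : realType) (m : nat) (theta : 'M[R]_m) (eps : R)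
    (r c s : nat) : seq block :=
  match s with
  | 0 => [:: (r, c, 0%N)]
  | s'.+1 =>
      if block_TV theta (r, c, s) <= eps then [:: (r, c, s)]
      else let h := (2 ^ s')%N in
        tv_split theta eps r c s' ++ tv_split theta eps r (c + h) s'
        ++ tv_split theta eps (r + h) c s' ++ tv_split theta eps (r + h) (c + h) s'
  end.

(* The partition P_{theta,eps} of [n] x [n], n = 2^k, as the list of its
   blocks (in depth-first order; this list is determined by the set of blocks). *)
Definition tv_partition (R : realType) (k : nat) (theta : 'M[R]_(2 ^ k)) (eps : R)
  : seq block := tv_split theta eps 0 0 k.

Definition in_partition_class (R : realType) (k : nat) (V eps : R)
    (P : seq block) : Prop :=
  exists theta : 'M[R]_(2 ^ k), TV theta <= V /\ P = tv_partition theta eps.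

(* Each split step of the scheme replaces a block of TV > eps by four quadrants
   whose TVs add up to at most the TV of the block.  Hence the blocks split at
   a given depth have disjoint quadrant sets, each split one costs more than
   eps of TV, and there are fewer than TV/eps splits per depth, i.e. at most
   log2 n * TV/eps splits N overall.  The partition has 1 + 3N blocks.  It is
   also determined by the preorder bit string "split or stop" of the recursion
   tree, of length at most 1 + 4N, so there are at most 2^(5N) partitions with
   at most N splits, which gives the entropy bound. *)
From HB Require Import structures.
From mathcomp Require Import all_boot all_order all_algebra.
From mathcomp Require Import all_classical all_reals all_analysis.
From mathcomp Require Import zify.
From mathcomp.algebra_tactics Require Import ring lra.
Import Order.TTheory GRing.Theory Num.Theory.
Set Implicit Arguments. Unset Strict Implicit.
Local Open Scope ring_scope.

Section SplitTree.
Variables (R : realType) (m : nat) (theta : 'M[R]_m) (eps : R).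

(* An edge counts only if its far endpoint lies before column [ce] (resp. row
   [re]), the end of the enclosing block. *)
Definition edge_variation (i j ce re : nat) : R :=
  (if (j.+1 < ce)%N then `|mget theta i j.+1 - mget theta i j| else 0)
  + (if (i.+1 < re)%N then `|mget theta i.+1 j - mget theta i j| else 0).

Lemma edge_variation_ge0 i j ce re : 0 <= edge_variation i j ce re.
Proof. by apply: addr_ge0; case: ifP. Qed.

Lemma edge_variation_mono i j ce re ce' re' :
  (ce <= ce')%N -> (re <= re')%N ->
  edge_variation i j ce re <= edge_variation i j ce' re'.
Proof.
move=> lece lere; apply: lerD.
- case: ifP => [ltce | _]; last by case: ifP.
  by rewrite ifT //; lia.
- case: ifP => [ltre | _]; last by case: ifP.
  by rewrite ifT //; lia.
Qed.

Lemma block_TVE r c s : block_TV theta (r, c, s) =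
  \sum_(r <= i < r + 2 ^ s) \sum_(c <= j < c + 2 ^ s)
     edge_variation i j (c + 2 ^ s) (r + 2 ^ s).
Proof. by []. Qed.

Lemma block_TV_ge0 b : 0 <= block_TV theta b.
Proof.
case: b => [[r c] s]; rewrite block_TVE.
by apply: sumr_ge0 => i _; apply: sumr_ge0 => j _; apply: edge_variation_ge0.
Qed.

Lemma sum_edge_variation_mono r1 r2 c1 c2 ce re ce' re' :
  (ce <= ce')%N -> (re <= re')%N ->
  \sum_(r1 <= i < r2) \sum_(c1 <= j < c2) edge_variation i j ce re
  <= \sum_(r1 <= i < r2) \sum_(c1 <= j < c2) edge_variation i j ce' re'.
Proof.
by move=> lece lere; do 2!(apply: ler_sum => ? _); apply: edge_variation_mono.
Qed.

Lemma block_TV_quadrants r c s :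
  block_TV theta (r, c, s) + block_TV theta (r, c + 2 ^ s, s)%N
  + block_TV theta (r + 2 ^ s, c, s)%N
  + block_TV theta (r + 2 ^ s, c + 2 ^ s, s)%N
  <= block_TV theta (r, c, s.+1).
Proof.
rewrite !block_TVE expnS; set h := (2 ^ s)%N.
have -> : (r + 2 * h = r + h + h)%N by lia.
have -> : (c + 2 * h = c + h + h)%N by lia.
have split_cols i : \sum_(c <= j < c + h + h) edge_variation i j (c + h + h) (r + h + h)
    = \sum_(c <= j < c + h) edge_variation i j (c + h + h) (r + h + h)
      + \sum_(c + h <= j < c + h + h) edge_variation i j (c + h + h) (r + h + h).
  by rewrite (@big_cat_nat _ _ _ (c + h)) //; lia.
rewrite [X in _ <= X](@big_cat_nat _ _ _ (r + h)) /=; [|lia|lia].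
rewrite !(eq_bigr _ (fun i _ => split_cols i)) !big_split /= -!addrA.
by do 3?[apply: lerD]; apply: sum_edge_variation_mono; lia.
Qed.

Fixpoint tv_nsplit (r c s : nat) : nat :=
  match s with
  | 0 => 0
  | s'.+1 =>
      if block_TV theta (r, c, s) <= eps then 0
      else let h := (2 ^ s')%N in
        (tv_nsplit r c s' + tv_nsplit r (c + h) s'
         + tv_nsplit (r + h) c s' + tv_nsplit (r + h) (c + h) s').+1
  end.

Fixpoint tv_code (r c s : nat) : seq bool :=
  match s with
  | 0 => [::]
  | s'.+1 =>
      if block_TV theta (r, c, s) <= eps then [:: false]
      else let h := (2 ^ s')%N in
        true :: (tv_code r c s' ++ tv_code r (c + h) s'
                 ++ tv_code (r + h) c s' ++ tv_code (r + h) (c + h) s')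
  end.

Lemma size_tv_split r c s :
  size (tv_split theta eps r c s) = (1 + 3 * tv_nsplit r c s)%N.
Proof.
elim: s r c => [|s IH] r c //=.
by case: ifP => // _; rewrite !size_cat !IH; lia.
Qed.

Lemma size_tv_code r c s : (size (tv_code r c s) <= 1 + 4 * tv_nsplit r c s)%N.
Proof.
elim: s r c => [|s IH] r c //=.
case: ifP => // _; rewrite /= !size_cat.
have := IH r c; have := IH r (c + 2 ^ s)%N; have := IH (r + 2 ^ s)%N c.
have := IH (r + 2 ^ s)%N (c + 2 ^ s)%N; lia.
Qed.

Lemma tv_nsplit0 r c s :
  tv_nsplit r c s = 0%N -> tv_split theta eps r c s = [:: (r, c, s)].
Proof. by case: s => [|s] //=; case: ifP. Qed.

Lemma tv_nsplit_le r c s :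
  (tv_nsplit r c s)%:R * eps <= s%:R * block_TV theta (r, c, s).
Proof.
elim: s r c => [|s IH] r c; first by rewrite /= !mul0r.
rewrite [tv_nsplit r c s.+1]/=; case: ifP => [_|/negbT].
  by rewrite mul0r mulr_ge0 ?block_TV_ge0.
rewrite -ltNge => /ltW eps_le.
rewrite -!natr1 !mulrDl !mul1r.
apply: lerD => //; apply: le_trans (ler_wpM2l (ler0n _ s) (block_TV_quadrants r c s)).
rewrite !mulrDr !natrD !mulrDl.
by do 3?[apply: lerD]; apply: IH.
Qed.

End SplitTree.

Fixpoint decode_split (r c s : nat) (bs : seq bool) : seq block * seq bool :=
  match s with
  | 0 => ([:: (r, c, 0%N)], bs)
  | s'.+1 =>
      match bs with
      | true :: bs' =>
          let h := (2 ^ s')%N in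
          let: (p1, b1) := decode_split r c s' bs' in
          let: (p2, b2) := decode_split r (c + h) s' b1 in
          let: (p3, b3) := decode_split (r + h) c s' b2 in
          let: (p4, b4) := decode_split (r + h) (c + h) s' b3 in
          (p1 ++ p2 ++ p3 ++ p4, b4)
      | _ => ([:: (r, c, s)], behead bs)
      end
  end.

Lemma decode_tv_code (R : realType) m (theta : 'M[R]_m) (eps : R) r c s rest :
  decode_split r c s (tv_code theta eps r c s ++ rest)
  = (tv_split theta eps r c s, rest).
Proof.
elim: s r c rest => [|s IH] r c rest //=.
by case: ifP => _ //=; rewrite -!catA !IH.
Qed.

Lemma uniq_prefix_decoded_size_le (T : eqType) (decode : seq bool -> T) L
    (xs : seq T) :
  uniq xs ->
  (forall x, x \in xs ->
     exists2 e : seq bool, (size e <= L)%N & forall rest, decode (e ++ rest) = x) ->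
  (size xs <= 2 ^ L)%N.
Proof.
move=> uniq_xs coded.
pose f (t : L.-tuple bool) := decode t.
have -> : (2 ^ L = size (map f (enum {: L.-tuple bool})))%N.
  by rewrite size_map -cardE card_tuple card_bool.
apply: uniq_leq_size => // x /coded [e le_eL decode_e].
have size_pad : size (e ++ nseq (L - size e) false) == L.
  by rewrite size_cat size_nseq; apply/eqP; lia.
rewrite -(decode_e (nseq (L - size e) false)).
exact: (map_f f (mem_enum _ (Tuple size_pad))).
Qed.

Lemma size_tv_partitions_le (R : realType) k (eps : R) M (Ps : seq (seq block)) :
  uniq Ps ->
  (forall P, P \in Ps -> exists theta : 'M[R]_(2 ^ k),
     P = tv_partition theta eps /\ (tv_nsplit theta eps 0 0 k <= M)%N) ->
  (size Ps <= 2 ^ (5 * M))%N.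
Proof.
move=> uniq_Ps few_splits; case: (posnP M) => [M0 | M_gt0].
  rewrite M0 (uniq_leq_size (s2 := [:: [:: (0%N, 0%N, k)]])) // => P.
  case/few_splits => th [-> ]; rewrite M0 leqn0 => /eqP nsplit0.
  by rewrite /tv_partition tv_nsplit0 ?inE.
apply: (@leq_trans (2 ^ (1 + 4 * M))); last by rewrite leq_exp2l //; lia.
apply: (uniq_prefix_decoded_size_le (decode := fun bs => (decode_split 0 0 k bs).1)) => //.
move=> P /few_splits [th [-> le_nsplit]]; exists (tv_code th eps 0 0 k).
  by apply: leq_trans (size_tv_code _ _ _ _ _) _; lia.
by move=> rest; rewrite decode_tv_code.
Qed.

Lemma ln2_ge_half (R : realType) : 1 / 2 <= ln (2 : R).
Proof.
have half_gt : -1 < - (1 / 2) :> R by lra.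
have := le_ln1Dx half_gt.
have -> : 1 + - (1 / 2) = (2 : R)^-1 by field.
by rewrite lnV ?posrE //; lra.
Qed.

Lemma ln_exp2n (R : realType) k : ln ((2 ^ k)%:R : R) = k%:R * ln 2.
Proof. by rewrite natrX lnXn // mulr_natl. Qed.

Lemma ln_natr_le_exp2n (R : realType) n L :
  (n <= 2 ^ L)%N -> ln (n%:R : R) <= L%:R * ln 2.
Proof.
have ln2_ge0 := ln2_ge_half R.
case: (posnP n) => [-> _ | n_gt0 le_n].
  by rewrite ln0 // mulr_ge0 //; lra.
by rewrite -ln_exp2n ler_ln ?posrE ?ltr0n ?expn_gt0 // ler_nat.
Qed.

Theorem lemma4p2 :
  exists C : nat, (0 < C)%N /\
  forall (R : realType) (k : nat) (theta : 'M[R]_(2 ^ k)) (eps : R),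
    0 < eps ->
    ((size (tv_partition theta eps))%:R
       <= 1 + C%:R * TV theta / eps * ln ((2 ^ k)%:R : R))
    /\
    (forall V : R, 0 < V ->
       forall Ps : seq (seq block),
         uniq Ps ->
         (forall P, P \in Ps -> in_partition_class k V eps P) ->
         ln ((size Ps)%:R : R) <= C%:R * V / eps * ln ((2 ^ k)%:R : R)).
Proof.
exists 6%N; split => // R k theta eps eps_gt0.
have ln2_ge := ln2_ge_half R.
have nsplit_le (th : 'M[R]_(2 ^ k)) :
    (tv_nsplit th eps 0 0 k)%:R <= k%:R * (TV th / eps).
  by rewrite mulrA ler_pdivlMr // tv_nsplit_le.
rewrite ln_exp2n; split.
  rewrite /tv_partition size_tv_split natrD natrM -(mulrA _ (TV theta)).
  have x_ge0 : 0 <= TV theta / eps.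
    by apply: divr_ge0; [exact: block_TV_ge0 | exact: ltW].
  have := mulr_ge0 (mulr_ge0 (ler0n R k) x_ge0) (_ : 0 <= ln (2 : R) - 1 / 2).
  by have := nsplit_le theta; nra.
move=> V V_gt0 Ps uniq_Ps in_class.
set M := Num.truncn (k%:R * (V / eps) : R).
have V_eps_ge0 : 0 <= V / eps by rewrite divr_ge0 ?ltW.
have M_le : M%:R <= k%:R * (V / eps) by rewrite truncn_le mulr_ge0.
have size_Ps : (size Ps <= 2 ^ (5 * M))%N.
  apply: size_tv_partitions_le => // P /in_class [th [TV_le ->]].
  exists th; split => //; rewrite /M truncn_ge_nat; last exact: mulr_ge0.
  apply: le_trans (nsplit_le th) _.
  by rewrite ler_wpM2l // ler_pM2r ?invr_gt0.
apply: le_trans (ln_natr_le_exp2n R size_Ps) _.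
have -> : 6%:R * V / eps * (k%:R * ln 2) = 6%:R * (k%:R * (V / eps)) * ln (2 : R).
  by rewrite mulrA; ring.
rewrite natrM ler_pM2r; last lra.
by have := mulr_ge0 (ler0n R k) V_eps_ge0; lra.
Qed.
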